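(* For every integer $n\ge 0$, there is exactly one Dumont permutation of the first kind of length $2n$ avoiding the pattern $321$, i.e. $|\mathfrak D^1_{2n}(321)|=1$ (for $n=0$ the set consists of the empty permutation).
   Context: A Dumont permutation of the first kind of length $2n$ is a permutation $\pi\in\mathfrak S_{2n}$ such that for every $i=1,\dots,2n$: if $\pi(i)$ is even then $i<2n$ and $\pi(i)>\pi(i+1)$; if $\pi(i)$ is odd then $i=2n$ or $\pi(i)<\pi(i+1)$. $\mathfrak D^1_{2n}$ denotes the set of these. A permutation $\sigma$ contains a pattern $\tau\in\mathfrak S_k$ if some subsequence $(\sigma(i_1),\dots,\sigma(i_k))$, $i_1<\dots<i_k$, is order-isomorphic to $\tau$; otherwise $\sigma$ avoids $\tau$. $\mathfrak D^1_{2n}(T)$ denotes the set of permutations in $\mathfrak D^1_{2n}$ avoiding every pattern in $T$. *)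

From mathcomp Require Import all_boot all_order all_fingroup.
Set Implicit Arguments. Unset Strict Implicit. Unset Printing Implicit Defensive.

(* Permutations of {1,...,m} are represented as s : {perm 'I_m}, with
   positions and values shifted by one (0-indexed): the value s i : 'I_m
   stands for the integer (s i) + 1 and position i for i + 1. *)

(* value of s at (0-indexed) position j, as a nat; 0 outside the range
   (never used outside the range below). *)
Definition pval (m : nat) (s : {perm 'I_m}) (j : nat) : nat :=
  if insub j is Some o then val (s o) else 0.

Definition dumont1 (m : nat) (s : {perm 'I_m}) : bool :=
  [forall i : 'I_m,
     if ~~ odd (val (s i)).+1
     then (i.+1 < m) && (pval s i.+1 < val (s i))
     else (i.+1 == m) || (val (s i) < pval s i.+1)]%N.

Definition contains (k m : nat) (sigma : {perm 'I_m}) (tau : {perm 'I_k}) : bool :=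
  [exists f : {ffun 'I_k -> 'I_m},
    [forall a : 'I_k, forall b : 'I_k, (a < b)%N ==> (f a < f b)%N] &&
    [forall a : 'I_k, forall b : 'I_k,
       (sigma (f a) < sigma (f b))%N == (tau a < tau b)%N]].

Definition avoids (k m : nat) (sigma : {perm 'I_m}) (tau : {perm 'I_k}) : bool :=
  ~~ contains sigma tau.

(* the pattern 321, i.e. 1 -> 3, 2 -> 2, 3 -> 1; 0-indexed: i |-> 2 - i *)
Definition pat321 : {perm 'I_3} := perm (@rev_ord_inj 3).

Definition dumont1_avoid321 (n : nat) : {set {perm 'I_(n.*2)}} :=
  [set s : {perm 'I_(n.*2)} | dumont1 s && avoids s pat321].

From Pilot Require Import Defs.
From mathcomp Require Import all_boot all_order all_fingroup.
From mathcomp Require Import zify.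
Set Implicit Arguments. Unset Strict Implicit. Unset Printing Implicit Defensive.

(* The only candidate is 2 1 4 3 ... 2n 2n-1, which swaps the values of each
   pair of positions {2k+1, 2k+2}.  Conversely, if a 321-avoiding Dumont
   permutation agrees with it on the first 2k positions, then the value
   2k+2 sits at some position r >= 2k+1; being even it is followed by a
   smaller value, which must be 2k+1.  If r > 2k+1, the value at position
   2k+1 exceeds 2k+2 and forms a 321 with positions r and r+1; hence r = 2k+1
   and the agreement extends to the first 2k+2 positions. *)

Definition pair_swap (j : nat) : nat := if odd j then j.-1 else j.+1.

Lemma pair_swapK : involutive pair_swap.
Proof. by case=> [|j] //; rewrite /pair_swap /=; case odd_j: (odd j); rewrite /= ?odd_j. Qed.

Lemma pair_swap_le j : pair_swap j <= j.+1.
Proof. by rewrite /pair_swap; case: (odd j); lia. Qed.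

Lemma le_pair_swap j : j <= (pair_swap j).+1.
Proof. by rewrite /pair_swap; case: (odd j); lia. Qed.

Lemma even_ltn_double n i : ~~ odd i -> i < n.*2 -> i.+1 < n.*2.
Proof.
move=> even_i lt_i_2n; rewrite ltn_neqAle lt_i_2n andbT.
by apply: contraNneq even_i => eq_2n; move: (odd_double n); rewrite -eq_2n => /negbFE.
Qed.

Lemma pair_swap_ltn_double n i : i < n.*2 -> pair_swap i < n.*2.
Proof.
rewrite /pair_swap; case: (boolP (odd i)) => [_|even_i]; first lia.
exact: even_ltn_double.
Qed.

Lemma pvalE m (s : {perm 'I_m}) j (lt_j_m : j < m) :
  Defs.pval s j = s (Ordinal lt_j_m) :> nat.
Proof. by rewrite /Defs.pval (insubT (fun k => k < m) lt_j_m). Qed.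

Lemma dumont1P m (s : {perm 'I_m}) :
  reflect (forall i : 'I_m,
             if odd (s i) then (exists h : i.+1 < m, s (Ordinal h) < s i)
             else forall h : i.+1 < m, s i < s (Ordinal h))
          (dumont1 s).
Proof.
apply: (iffP forallP) => D i; have {D} := D i; rewrite /= negbK.
- case: (odd (s i)) => [/andP [h]|/orP [/eqP eq_m h|lt_next h]].
  + by rewrite (pvalE s h); exists h.
  + by exfalso; rewrite eq_m ltnn in h.
  + by rewrite -(pvalE s h).
- case: (odd (s i)) => [[h lt_next]|lt_next].
  + by rewrite h (pvalE s h).
  + case: (ltnP i.+1 m) => [h|ge_m]; first by rewrite (pvalE s h) lt_next orbT.
    by rewrite eqn_leq ge_m ltn_ord.
Qed.

Lemma contains_pat321P m (s : {perm 'I_m}) :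
  reflect (exists i j k : 'I_m, [/\ i < j, j < k, s j < s i & s k < s j])
          (contains s pat321).
Proof.
apply: (iffP existsP) => [[f /andP [/forallP inc /forallP ord]]|[i [j [k]]]].
- have lt_f (a b : 'I_3) : a < b -> f a < f b by exact: implyP (forallP (inc a) b).
  have ord_f (a b : 'I_3) : (s (f a) < s (f b)) = (pat321 a < pat321 b).
    exact: eqP (forallP (ord a) b).
  exists (f (@Ordinal 3 0 isT)), (f (@Ordinal 3 1 isT)), (f (@Ordinal 3 2 isT)).
  by split; rewrite ?lt_f ?ord_f ?permE.
- case=> lt_ij lt_jk lt_sji lt_skj.
  exists [ffun a : 'I_3 => nth i [:: i; j; k] a].
  by apply/andP; split; apply/forallP => -[[|[|[|a]]] ?] //; apply/forallP => -[[|[|[|b]]] ?];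
    rewrite //= !ffunE /= ?permE /=; lia.
Qed.

Section PairSwapPermutation.

Variable n : nat.
Local Notation m := n.*2.

Definition pair_swap_ord (i : 'I_m) : 'I_m := Ordinal (pair_swap_ltn_double (ltn_ord i)).

Lemma pair_swap_ord_inj : injective pair_swap_ord.
Proof.
by move=> a b /(congr1 (pair_swap \o val)) /=; rewrite !pair_swapK => /val_inj.
Qed.

Definition pair_swap_perm : {perm 'I_m} := perm pair_swap_ord_inj.

Lemma pair_swap_permE (i : 'I_m) : pair_swap_perm i = pair_swap i :> nat.
Proof. by rewrite permE. Qed.

Lemma dumont1_pair_swap_perm : dumont1 pair_swap_perm.
Proof.
apply/dumont1P => i; rewrite pair_swap_permE /pair_swap.
case: (boolP (odd i)) => [odd_i|even_i].
- have even_pred : odd i.-1 = false by case: (i : nat) odd_i => //= j /negbTE.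
  rewrite even_pred => h; rewrite pair_swap_permE /pair_swap /= odd_i /=; lia.
- have lt_next := even_ltn_double even_i (ltn_ord i).
  rewrite /= (negbTE even_i); exists lt_next.
  by rewrite pair_swap_permE /pair_swap /= (negbTE even_i).
Qed.

Lemma avoids321_pair_swap_perm : avoids pair_swap_perm pat321.
Proof.
apply/contains_pat321P => -[i [j [k []]]]; rewrite !pair_swap_permE.
by have := pair_swap_le i; have := le_pair_swap k; lia.
Qed.

Variable s : {perm 'I_m}.
Hypotheses (s_dumont1 : dumont1 s) (s_avoids : avoids s pat321).

Lemma prefix_pair_swap_low k :
    (forall j : 'I_m, j < k.*2 -> s j = pair_swap j :> nat) ->
  forall j : 'I_m, k.*2 <= j -> k.*2 <= s j.
Proof.
move=> prefix j le_j; rewrite leqNgt; apply/negP => lt_sj.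
have lt_sw : pair_swap (s j) < k.*2 := pair_swap_ltn_double lt_sj.
have lt_sw_m : pair_swap (s j) < m by have := ltn_ord j; lia.
have := prefix (Ordinal lt_sw_m) lt_sw; rewrite /= pair_swapK.
by move/val_inj/perm_inj/(congr1 val) => /= eq_j; lia.
Qed.

Lemma prefix_pair_swap_step k :
    (forall j : 'I_m, j < k.*2 -> s j = pair_swap j :> nat) ->
  forall j : 'I_m, j < k.*2.+2 -> s j = pair_swap j :> nat.
Proof.
move=> prefix j lt_j; case: (ltnP j k.*2) => [|le_j]; first exact: prefix.
have low := prefix_pair_swap_low prefix.
have lt_2k : k.*2 < m by have := ltn_ord j; lia.
have lt_2k1 : k.*2.+1 < m by apply: even_ltn_double; rewrite ?odd_double.
pose r := (s^-1)%g (Ordinal lt_2k1).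
have sr : s r = k.*2.+1 :> nat by rewrite permKV.
have le_r : k.*2 <= r.
  rewrite leqNgt; apply/negP => lt_r; have := prefix r lt_r.
  by rewrite sr; have := pair_swap_le r; lia.
have [lt_r1 lt_sr1] : exists h : r.+1 < m, s (Ordinal h) < s r.
  by have := dumont1P _ s_dumont1 r; rewrite sr /= odd_double.
have sr1 : s (Ordinal lt_r1) = k.*2 :> nat.
  by have := low (Ordinal lt_r1) (leqW le_r); rewrite sr in lt_sr1; lia.
have r_eq : r = k.*2 :> nat.
  apply/eqP; rewrite eqn_leq le_r leqNgt; apply/negP => lt_r.
  pose a : 'I_m := Ordinal lt_2k.
  have ne_sa (b : 'I_m) : a != b -> s a != s b by rewrite (inj_eq perm_inj).
  have ne_r : s a != s r by apply: ne_sa; rewrite -(inj_eq val_inj) /=; lia.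
  have ne_r1 : s a != s (Ordinal lt_r1) by apply: ne_sa; rewrite -(inj_eq val_inj) /=; lia.
  move/contains_pat321P: s_avoids; apply; exists a, r, (Ordinal lt_r1).
  move: ne_r ne_r1 (low a (leqnn _)); rewrite -!(inj_eq val_inj) sr sr1 /=.
  by split => //; lia.
have [j_eq|j_eq] : j = k.*2 :> nat \/ j = k.*2.+1 :> nat by lia.
- have -> : j = r by apply: val_inj; rewrite /= j_eq r_eq.
  by rewrite sr r_eq /pair_swap odd_double.
- have -> : j = Ordinal lt_r1 by apply: val_inj; rewrite /= j_eq r_eq.
  by rewrite sr1 /= r_eq /pair_swap /= odd_double.
Qed.

Lemma dumont1_avoids321_eq : s = pair_swap_perm.
Proof.
suff prefix k : forall j : 'I_m, j < k.*2 -> s j = pair_swap j :> nat.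
  by apply/permP => i; apply: val_inj; rewrite /= pair_swap_permE (prefix n).
by elim: k => [//|k]; exact: prefix_pair_swap_step.
Qed.

End PairSwapPermutation.

Theorem theorem2p3 (n : nat) : #|dumont1_avoid321 n| = 1%N.
Proof.
suff -> : dumont1_avoid321 n = [set pair_swap_perm n] by exact: cards1.
apply/setP => s; rewrite !inE; apply/andP/eqP => [[]|->].
- exact: dumont1_avoids321_eq.
- by split; [exact: dumont1_pair_swap_perm | exact: avoids321_pair_swap_perm].
Qed.
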